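(* Let $G$ be a connected graph, let $e=\{x,y\}$ and $f=\{u,v\}$ be edges of $G$, and consider the edges $e_{\bar{x}}=\{\bar{x},\overline{xy}\}$ and $f_{\bar{u}}=\{\bar{u},\overline{uv}\}$ of the full subdivision $S(G)$. If $e_{\bar{x}}\,\Theta_{S(G)}\,f_{\bar{u}}$, then $e\,\Theta_G\,f$.
   Context: For a connected graph $H$ with shortest-path distance $d_H$, two edges $\{x,y\}$ and $\{u,v\}$ of $H$ are in relation $\Theta_H$ (the Djoković–Winkler relation) if $d_H(x,u)+d_H(y,v)\neq d_H(x,v)+d_H(y,u)$. The full subdivision $S(G)$ of $G$ is obtained by subdividing every edge of $G$ exactly once; the vertex of $S(G)$ corresponding to a vertex $x$ of $G$ is denoted $\bar{x}$, and the new vertex subdividing the edge $\{x,y\}$ is denoted $\overline{xy}$. For an edge $e=\{x,y\}$ of $G$, $e_{\bar{x}}$ denotes the edge $\{\bar{x},\overline{xy}\}$ of $S(G)$ and $e_{\bar{y}}$ the edge $\{\bar{y},\overline{xy}\}$. *)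

From mathcomp Require Import all_boot.
Set Implicit Arguments. Unset Strict Implicit. Unset Printing Implicit Defensive.

Definition simple_graph (T : finType) (g : rel T) :=
  symmetric g /\ irreflexive g.

Definition connected_graph (T : finType) (g : rel T) :=
  forall a b : T, connect g a b.

Definition walk_of_len (T : finType) (g : rel T) (a b : T) (n : nat) : bool :=
  [exists p : n.-tuple T, path g a p && (last a p == b)].

(* shortest-path distance: least n admitting a walk of length n from a to b
   (in a connected graph such an n < #|T| always exists) *)
Definition dist (T : finType) (g : rel T) (a b : T) : nat :=
  find (walk_of_len g a b) (iota 0 #|T|).

Definition theta (T : finType) (g : rel T) (a b c d : T) : bool :=
  g a b && g c d &&
  (dist g a c + dist g b d != dist g a d + dist g b c).

Definition is_edge (T : finType) (g : rel T) (S : {set T}) : bool :=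
  [exists x, exists y, g x y && (S == [set x; y])].

Definition edge (T : finType) (g : rel T) := {S : {set T} | is_edge g S}.

(* vertices of the full subdivision S(G): inl x = \bar{x}, inr E = \bar{xy} *)
Definition subdiv_vertex (T : finType) (g : rel T) : finType :=
  (T + edge g)%type.

Definition subdiv_rel (T : finType) (g : rel T) : rel (subdiv_vertex g) :=
  fun a b => match a, b with
             | inl x, inr E => x \in val E
             | inr E, inl x => x \in val E
             | _, _ => false
             end.
Arguments subdiv_rel {T} g.
Arguments subdiv_vertex {T} g.

(* In S(G) the distance from an original vertex p is the potential equal to
   2 d(p,z) at z and to 2 min(d(p,a), d(p,b)) + 1 at the subdivision vertex of
   {a,b}: it changes by at most 1 along the edges of S(G), and doubling a
   shortest walk of G realizes it. A subdivision vertex is one step further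
   from any other vertex than the closer of its two neighbours. This expresses
   the four S(G)-distances of the hypothesis through d(x,u), d(x,v), d(y,u) and
   d(y,v); if d(x,u) + d(y,v) = d(x,v) + d(y,u), the corresponding sums in S(G)
   agree because d(x,.) and d(.,u) are 1-Lipschitz. *)

From mathcomp Require Import all_boot zify.
Set Implicit Arguments. Unset Strict Implicit.

Section Walks.
Variables (T : finType) (g : rel T).

Lemma walkP a b n :
  reflect (exists p : seq T, [/\ size p = n, path g a p & last a p = b])
          (walk_of_len g a b n).
Proof.
apply: (iffP existsP) => [[p /andP[gp /eqP lp]] | [p [sp gp lp]]].
  by exists (val p); rewrite size_tuple.
have sp' : size p == n by rewrite sp.
by exists (Tuple sp'); rewrite /= gp lp eqxx.
Qed.

Lemma walk_nil a : walk_of_len g a a 0.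
Proof. by apply/walkP; exists [::]. Qed.

Lemma walk_nil_eq a b : walk_of_len g a b 0 -> a = b.
Proof. by case/walkP=> [[|c p] []]. Qed.

Lemma walk_cons a c b n :
  g a c -> walk_of_len g c b n -> walk_of_len g a b n.+1.
Proof.
move=> gac /walkP[p [sp gp lp]]; apply/walkP; exists (c :: p).
by rewrite /= sp gac gp lp.
Qed.

Lemma walk_consP a b n :
  walk_of_len g a b n.+1 -> exists2 c, g a c & walk_of_len g c b n.
Proof.
case/walkP=> [[|c p] [//= [sp] /andP[gac gp] lp]].
by exists c => //; apply/walkP; exists p.
Qed.

Lemma walk_cat a b c n m :
  walk_of_len g a b n -> walk_of_len g b c m -> walk_of_len g a c (n + m).
Proof.
case/walkP=> [p [sp gp lp]] /walkP[q [sq gq lq]]; apply/walkP; exists (p ++ q).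
by rewrite size_cat cat_path last_cat lp sp sq gp gq lq.
Qed.

Lemma walk_shorten a b n : walk_of_len g a b n ->
  exists2 m, m < #|T| & (m <= n) && walk_of_len g a b m.
Proof.
move=> wn; have [ltnT | leTn] := ltnP n #|T|; first by exists n; rewrite ?leqnn.
case/walkP: wn => p [_ gp lp]; move: lp; case: (shortenP gp) => q gq uq _ lq.
have ltqT : size q < #|T| by move/card_uniqP: uq => /= <-; apply: max_card.
exists (size q) => //; rewrite (leq_trans (ltnW ltqT) leTn).
by apply/walkP; exists q.
Qed.

Lemma dist_walk a b n :
  walk_of_len g a b n -> walk_of_len g a b (dist g a b).
Proof.
case/walk_shorten=> m ltmT /andP[_ wm].
have hasw : has (walk_of_len g a b) (iota 0 #|T|).
  by apply/hasP; exists m; rewrite ?mem_iota.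
have := nth_find 0 hasw; rewrite nth_iota //.
by rewrite has_find size_iota in hasw.
Qed.

Lemma dist_min a b n : walk_of_len g a b n -> dist g a b <= n.
Proof.
case/walk_shorten=> m ltmT /andP[lemn wm]; apply: leq_trans lemn.
rewrite /dist leqNgt; apply/negP => /(before_find 0).
by rewrite nth_iota // add0n wm.
Qed.

Lemma dist_refl a : dist g a a = 0.
Proof. by apply/eqP; rewrite -leqn0 dist_min ?walk_nil. Qed.

Lemma dist_edge a b : g a b -> dist g a b <= 1.
Proof. by move=> gab; apply/dist_min/(walk_cons gab)/walk_nil. Qed.

Lemma dist_cons a c b n :
  g a c -> walk_of_len g c b n -> dist g a b <= (dist g c b).+1.
Proof. by move=> gac /dist_walk/(walk_cons gac)/dist_min. Qed.

Lemma dist_consP a b n : a != b -> walk_of_len g a b n ->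
  exists2 c, g a c & dist g a b = (dist g c b).+1.
Proof.
move=> neqab /dist_walk; case def_d: (dist g a b) => [|k].
  by move/walk_nil_eq/eqP; rewrite (negPf neqab).
case/walk_consP=> c gac wk; exists c => //.
apply/eqP; rewrite eqn_leq -{1}def_d (dist_cons gac wk) ltnS.
exact: dist_min wk.
Qed.

Section Potential.
Variable phi : T -> nat.
Hypothesis phi_lipschitz : forall s t, g s t -> phi t <= (phi s).+1.

Lemma potential_walk_le a b n : walk_of_len g a b n -> phi b <= phi a + n.
Proof.
case/walkP=> p [<- gp <-]; elim: p a gp => [|c p IHp] a /=; first by rewrite addn0.
case/andP=> /phi_lipschitz le_ac /IHp; lia.
Qed.

Lemma dist_potential a b :
  phi a = 0 -> walk_of_len g a b (phi b) -> dist g a b = phi b.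
Proof.
move=> phia0 w; apply/eqP; rewrite eqn_leq (dist_min w) /=.
by have := potential_walk_le (dist_walk w); rewrite phia0.
Qed.

End Potential.

Section Connected.
Hypothesis g_connected : connected_graph g.

Lemma walk_dist a b : walk_of_len g a b (dist g a b).
Proof.
case/connectP: (g_connected a b) => p gp lp.
by apply: (@dist_walk _ _ (size p)); apply/walkP; exists p.
Qed.

Lemma dist_triangle a b c : dist g a c <= dist g a b + dist g b c.
Proof. exact/dist_min/walk_cat/walk_dist/walk_dist. Qed.

Lemma dist_eq0 a b : (dist g a b == 0) = (a == b).
Proof.
apply/eqP/eqP => [d0 | ->]; last exact: dist_refl.
by apply: walk_nil_eq; rewrite -d0 walk_dist.
Qed.

Lemma dist_adjr p s t : g s t -> dist g p t <= (dist g p s).+1.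
Proof. by move/dist_edge; have := dist_triangle p s t; lia. Qed.

Hypothesis g_sym : symmetric g.

Lemma dist_adjl p s t : g s t -> dist g t p <= (dist g s p).+1.
Proof. by rewrite g_sym => /dist_edge; have := dist_triangle t s p; lia. Qed.

End Connected.
End Walks.

Lemma set2_inj (T : finType) (a b c d : T) : a != b ->
  [set a; b] = [set c; d] -> (a = c /\ b = d) \/ (a = d /\ b = c).
Proof.
move=> neqab eqS.
have /set2P[] : a \in [set c; d] by rewrite -eqS set21.
all: have /set2P[] : b \in [set c; d] by rewrite -eqS set22.
all: move=> eb ea; move: neqab; rewrite ea eb ?eqxx //.
  by left.
by right.
Qed.

(* [a], [b], [c], [e] stand for d(x,u), d(x,v), d(y,u), d(y,v). *)
Lemma subdiv_dist_arith a b c e :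
    a <= b.+1 -> b <= a.+1 -> a <= c.+1 -> c <= a.+1 -> a + e = b + c ->
  2 * a + (minn (2 * minn a b).+1 (2 * minn c e).+1).+1
    = (2 * minn a b).+1 + (minn (2 * a) (2 * c)).+1.
Proof. lia. Qed.

Section Subdivision.
Variables (T : finType) (g : rel T).
Hypotheses (g_sym : symmetric g) (g_irr : irreflexive g).
Hypothesis g_connected : connected_graph g.

Local Notation d := (dist g).
Local Notation sg := (subdiv_rel g).
Local Notation sd := (dist (subdiv_rel g)).

Lemma neq_adj a b : g a b -> a != b.
Proof. by apply: contraTneq => ->; rewrite g_irr. Qed.

Lemma theta_same_edge x y u v :
  g x y -> [set x; y] = [set u; v] -> theta g x y u v.
Proof.
move=> gxy; have gyx : g y x by rewrite g_sym.
have [dxy dyx] : d x y != 0 /\ d y x != 0.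
  by rewrite !(dist_eq0 g_connected) neq_adj // eq_sym neq_adj.
case/(set2_inj (neq_adj gxy)) => -[<- <-]; rewrite /theta gxy ?gyx !dist_refl /=.
  by rewrite eq_sym addn_eq0 negb_and dxy.
by rewrite addn_eq0 negb_and dxy.
Qed.

Lemma ends_subproof (E : edge g) :
  exists ab : T * T, g ab.1 ab.2 && (val E == [set ab.1; ab.2]).
Proof. by case: E => S /= /existsP[a /existsP[b gS]]; exists (a, b). Qed.

Definition ends (E : edge g) : T * T := xchoose (ends_subproof E).

Lemma ends_adj (E : edge g) : g (ends E).1 (ends E).2.
Proof. by case/andP: (xchooseP (ends_subproof E)). Qed.

Lemma endsE (E : edge g) : val E = [set (ends E).1; (ends E).2].
Proof. by case/andP: (xchooseP (ends_subproof E)) => _ /eqP. Qed.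

Lemma ends_in1 (E : edge g) : (ends E).1 \in val E.
Proof. by rewrite endsE set21. Qed.

Lemma ends_in2 (E : edge g) : (ends E).2 \in val E.
Proof. by rewrite endsE set22. Qed.

Lemma minn_ends (F : T -> nat) (E : edge g) a b : g a b -> val E = [set a; b] ->
  minn (F (ends E).1) (F (ends E).2) = minn (F a) (F b).
Proof.
rewrite endsE => /neq_adj neqab /esym /(set2_inj neqab)[[-> ->] | [-> ->]] //.
exact: minnC.
Qed.

Definition edge_dist (p : T) (E : edge g) := minn (d p (ends E).1) (d p (ends E).2).

Lemma edge_dist_bounds p (E : edge g) z :
  z \in val E -> edge_dist p E <= d p z <= (edge_dist p E).+1.
Proof.
have gE := ends_adj E; have gE' : g (ends E).2 (ends E).1 by rewrite g_sym.
have := dist_adjr g_connected p gE.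
have := dist_adjr g_connected p gE'.
by rewrite /edge_dist endsE => ? ? /set2P[] ->; lia.
Qed.

Definition sub_potential (p : T) (s : subdiv_vertex g) : nat :=
  match s with
  | inl z => 2 * d p z
  | inr E => (2 * edge_dist p E).+1
  end.

Lemma sub_potential_lipschitz p s t :
  sg s t -> sub_potential p t <= (sub_potential p s).+1.
Proof.
by case: s t => [z|E] [z'|E'] //= /(edge_dist_bounds p) /andP[]; lia.
Qed.

Lemma walk_subdiv a b n :
  walk_of_len g a b n -> walk_of_len sg (inl a) (inl b) (2 * n).
Proof.
elim: n a => [|n IHn] a; first by move/walk_nil_eq => ->; apply: walk_nil.
case/walk_consP=> c gac /IHn wc; rewrite mulnS add2n.
have Eac : is_edge g [set a; c].
  by apply/existsP; exists a; apply/existsP; exists c; rewrite gac eqxx.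
pose E : edge g := exist (is_edge g) _ Eac.
apply: (@walk_cons _ sg _ (inr E)); first by rewrite /= set21.
by apply: (@walk_cons _ sg _ (inl c)); first by rewrite /= set22.
Qed.

Lemma walk_sub_potential p t : walk_of_len sg (inl p) t (sub_potential p t).
Proof.
case: t => [q|E] /=; first exact/walk_subdiv/walk_dist.
have [z Ez ->] : exists2 z, z \in val E & edge_dist p E = d p z.
  rewrite endsE /edge_dist; case: (leqP (d p (ends E).1) (d p (ends E).2)).
    by exists (ends E).1; rewrite ?set21 //; lia.
  by exists (ends E).2; rewrite ?set22 //; lia.
rewrite -addn1; apply: (walk_cat (walk_subdiv (walk_dist g_connected p z))).
exact: (@walk_cons _ sg (inl z) (inr E) _ _ Ez (walk_nil _ _)).
Qed.

Lemma sdist_inl p t : sd (inl p) t = sub_potential p t.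
Proof.
apply: dist_potential (walk_sub_potential p t); last by rewrite /= dist_refl.
exact: sub_potential_lipschitz.
Qed.

Lemma sdist_inl_inl p q : sd (inl p) (inl q) = 2 * d p q.
Proof. by rewrite sdist_inl. Qed.

Lemma sdist_inl_inr p (E : edge g) a b : g a b -> val E = [set a; b] ->
  sd (inl p) (inr E) = (2 * minn (d p a) (d p b)).+1.
Proof. by move=> gab Eab; rewrite sdist_inl /= /edge_dist (minn_ends _ gab Eab). Qed.

Lemma sdist_inr (E : edge g) a b t : g a b -> val E = [set a; b] -> t != inr E ->
  sd (inr E) t = (minn (sd (inl a) t) (sd (inl b) t)).+1.
Proof.
move=> gab Eab neqt; rewrite -(minn_ends (fun z => sd (inl z) t) gab Eab).
have w z : z \in val E -> walk_of_len sg (inr E) t (sd (inl z) t).+1.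
  move=> Ez; apply: (@walk_cons _ sg (inr E) (inl z)) => //.
  exact/dist_walk/walk_sub_potential.
have [w1 w2] := (w _ (ends_in1 E), w _ (ends_in2 E)).
have := dist_min w1; have := dist_min w2.
have neqEt : inr E != t by rewrite eq_sym.
have [[z|//] Ez ->] := dist_consP neqEt w1.
move: Ez; rewrite /= endsE => /set2P[] -> le_z2 le_z1; congr _.+1.
  exact/esym/minn_idPl/le_z2.
exact/esym/minn_idPr/le_z1.
Qed.

End Subdivision.

Theorem lemma3p1 (T : finType) (g : rel T) :
  simple_graph g -> connected_graph g ->
  forall (x y u v : T) (Exy Euv : edge g),
    g x y -> g u v ->
    val Exy = [set x; y] -> val Euv = [set u; v] ->
    theta (subdiv_rel g) (inl x) (inr Exy) (inl u) (inr Euv) ->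
    theta g x y u v.
Proof.
move=> [g_sym g_irr] g_conn x y u v Exy Euv gxy guv Ex Eu thetaS.
have [eqE | neqE] := eqVneq Exy Euv.
  by apply: theta_same_edge => //; rewrite -Ex -Eu eqE.
have gvu : g v u by rewrite g_sym.
have gyx : g y x by rewrite g_sym.
move: thetaS => /andP[_]; rewrite /theta gxy guv /=; apply: contra => /eqP sumG.
have sd_inl_inl := sdist_inl_inl g_sym g_conn.
have sd_inl_inr := sdist_inl_inr g_sym g_irr g_conn.
have sd_inr := sdist_inr g_irr g_conn.
have neq_inl : inl u != inr Exy :> subdiv_vertex g by [].
have neq_inr : inr Euv != inr Exy :> subdiv_vertex g.
  by apply: contra_neq neqE => -[->].
rewrite (sd_inr _ _ _ _ gxy Ex neq_inl) (sd_inr _ _ _ _ gxy Ex neq_inr).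
rewrite !sd_inl_inl !(sd_inl_inr _ _ _ _ guv Eu).
apply/eqP/subdiv_dist_arith => //.
- exact: dist_adjr g_conn x _ _ gvu.
- exact: dist_adjr g_conn x _ _ guv.
- exact: dist_adjl g_conn g_sym u _ _ gyx.
- exact: dist_adjl g_conn g_sym u _ _ gxy.
Qed.
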